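(* Consider the deterministic split-node max-neighbour algorithm described in the context, on a dynamic graph $(G_r)_{r\ge1}$ with node set $V$. For every round $r\ge1$, \[ \phi(V,w_r)\le\phi(V,w_{r-1})-D_r/2 . \]
   Context: Setting: a fixed set $V$ of $n$ nodes, a sequence of connected graphs $G_r=(V,E_r)$ ($r\ge1$), $N_r(v)$ the neighbours of $v$ in $G_r$, non-negative real loads $w_0(v)$, and $w_r(v)$ the load of $v$ at the end of round $r$. For a finite set $U$ and $w:U\to\mathbb{R}_{\ge0}$ define $\phi(U,w)=\sum_{\{u,v\}\subseteq U}|w(u)-w(v)|$ (sum over unordered pairs of distinct elements). Algorithm: each node $v$ is split into two virtual nodes $v_s$ (sender) and $v_a$ (receiver). In round $r$: set $w_r^1(v_s)=w_r^1(v_a)=w_{r-1}(v)/2$. Each $v_s$ sends a proposal to $u_a$ where $u\in N_r(v)$ maximizes $|w_{r-1}(u)-w_{r-1}(v)|$ (ties broken by a fixed deterministic rule). Each $v_a$ that received proposals accepts exactly one, from $u_s$ with $u$ maximizing $|w_{r-1}(u)-w_{r-1}(v)|$ among proposers (deterministic tie-breaking). For each accepted pair $(u_s,v_a)$, set $w_r^2(u_s)=w_r^2(v_a)=(w_r^1(u_s)+w_r^1(v_a))/2$; other virtual nodes keep their value. Then $w_r(v)=w_r^2(v_s)+w_r^2(v_a)$. An ordered pair $(u,v)$ connects at round $r$ if $u_s$'s proposal to $v_a$ was accepted in round $r$; $A_r$ is the set of ordered pairs that connect at round $r$, and \[ D_r=\frac12\sum_{(u,v)\in A_r}|w_{r-1}(u)-w_{r-1}(v)|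 . \] *)

From mathcomp Require Import all_boot all_order all_algebra.
Set Implicit Arguments. Unset Strict Implicit. Unset Printing Implicit Defensive.
Import Order.TTheory GRing.Theory Num.Theory.
Local Open Scope ring_scope.

Section Defs.
Variables (R : realFieldType) (V : finType).

Definition phi (w : V -> R) : R :=
  \sum_(u : V) \sum_(v : V | (enum_rank u < enum_rank v)%N) `|w u - w v|.

Definition simple_connected (E : rel V) : Prop :=
  symmetric E /\ irreflexive E /\ (forall u v : V, connect E u v).

(* prop v = Some u : the sender v_s proposes to u_a, with u a neighbour of v
   maximising |w(u) - w(v)|; None : v has no neighbour (no proposal). *)
Definition valid_prop (E : rel V) (w : V -> R) (prop : V -> option V) : Prop :=
  forall v : V,
    match prop v with
    | Some u => E v u /\ (forall u', E v u' -> `|w u' - w v| <= `|w u - w v|)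
    | None => forall u, ~~ E v u
    end.

(* acc v = Some u : the receiver v_a accepts the proposal of u_s, where u
   maximises |w(u) - w(v)| among the proposers of v; None : no proposals. *)
Definition valid_acc (w : V -> R) (prop acc : V -> option V) : Prop :=
  forall v : V,
    match acc v with
    | Some u => prop u = Some v /\
        (forall u', prop u' = Some v -> `|w u' - w v| <= `|w u - w v|)
    | None => forall u, prop u <> Some v
    end.

Definition sender_val (w : V -> R) (prop acc : V -> option V) (u : V) : R :=
  match prop u with
  | Some v => if acc v == Some u then (w u / 2 + w v / 2) / 2 else w u / 2
  | None => w u / 2
  end.

Definition receiver_val (w : V -> R) (acc : V -> option V) (v : V) : R :=
  match acc v with
  | Some u => (w u / 2 + w v / 2) / 2
  | None => w v / 2
  end.

Definition round_load (w : V -> R) (prop acc : V -> option V) (v : V) : R :=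
  sender_val w prop acc v + receiver_val w acc v.

Definition Dr (w : V -> R) (acc : V -> option V) : R :=
  (\sum_(u : V) \sum_(v : V | acc v == Some u) `|w u - w v|) / 2.

End Defs.

From mathcomp Require Import all_boot all_order all_algebra.
From mathcomp Require Import lra.

Set Implicit Arguments.
Unset Strict Implicit.
Unset Printing Implicit Defensive.
Import Order.TTheory GRing.Theory Num.Theory.
Local Open Scope ring_scope.

(* Split every node into a sender and a receiver copy, each carrying half of
   its load.  Accepted proposals match sender copies with receiver copies, and
   a round replaces the values of the two copies of each matched pair by their
   average.  Averaging along a matching lowers the sum of all distances
   |x a - x b| over ordered pairs of copies by at least the sum of the gaps
   across matched pairs, counted from both ends; with half loads these gaps
   add up to 2 D_r.  Merging the two copies of a node back into its new load
   at least halves that sum, because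
   2 |a + b - c - d| <= |a - c| + |a - d| + |b - c| + |b - d|. *)

Section TotalDistance.
Variable R : realFieldType.

Definition total_dist (T : finType) (x : T -> R) : R :=
  \sum_a \sum_b `|x a - x b|.

Lemma eq_total_dist (T : finType) (x y : T -> R) :
  x =1 y -> total_dist x = total_dist y.
Proof. by move=> xy; apply: eq_bigr => a _; apply: eq_bigr => b _; rewrite !xy. Qed.

Lemma phi_total_dist (V : finType) (f : V -> R) : phi f = total_dist f / 2.
Proof.
rewrite /phi /total_dist.
have -> : \sum_u \sum_v `|f u - f v| =
    \sum_u \sum_v (if (enum_rank u < enum_rank v)%N then `|f u - f v| else 0)
  + \sum_u \sum_v (if (enum_rank v < enum_rank u)%N then `|f v - f u| else 0).
  rewrite -big_split; apply: eq_bigr => u _; rewrite -big_split.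
  apply: eq_bigr => v _ /=; case: ltngtP => [_|_|/val_inj/enum_rank_inj ->].
  - by rewrite addr0.
  - by rewrite add0r distrC.
  - by rewrite subrr normr0 addr0.
rewrite [X in _ + X]exchange_big /=.
under eq_bigr do rewrite big_mkcond.
lra.
Qed.

Lemma norm_half_sub (a b : R) : `|a / 2 - b / 2| = `|a - b| / 2.
Proof. by rewrite -mulrBl normrM [`|2^-1|]gtr0_norm ?invr_gt0 ?ltr0n. Qed.

Lemma ler_norm_sub2 (a b c d : R) :
  2 * `|a + b - c - d| <= `|a - c| + `|a - d| + `|b - c| + `|b - d|.
Proof.
have h1 : `|a + b - c - d| <= `|a - c| + `|b - d|.
  by rewrite (_ : a + b - c - d = (a - c) + (b - d)) ?ler_normD //; lra.
have h2 : `|a + b - c - d| <= `|a - d| + `|b - c|.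
  by rewrite (_ : a + b - c - d = (a - d) + (b - c)) ?ler_normD //; lra.
lra.
Qed.

Lemma sum_prod_bool (T : finType) (F : T * bool -> R) :
  \sum_a F a = \sum_u (F (u, true) + F (u, false)).
Proof.
rewrite (eq_bigr (fun a => (fun u (b : bool) => F (u, b)) a.1 a.2)); last by case.
by rewrite -(pair_bigA _ (fun u (b : bool) => F (u, b))); under eq_bigr do rewrite big_bool.
Qed.

Lemma total_dist_merge (T : finType) (y : T * bool -> R) :
  total_dist (fun u => y (u, true) + y (u, false)) <= total_dist y / 2.
Proof.
rewrite /total_dist sum_prod_bool mulr_suml; apply: ler_sum => u _.
rewrite !sum_prod_bool -big_split mulr_suml; apply: ler_sum => v _ /=.
have := ler_norm_sub2 (y (u, true)) (y (u, false)) (y (v, true)) (y (v, false)).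
rewrite opprD addrA; lra.
Qed.

Section Involution.
Variables (T : finType) (p : T -> T) (x : T -> R).
Hypothesis pK : involutive p.

Let y a : R := (x a + x (p a)) / 2.
Let gap a : R := `|x a - x (p a)|.

Lemma total_dist_comp_involution : total_dist (x \o p) = total_dist x.
Proof.
rewrite /total_dist [RHS](reindex_inj (can_inj pK)); apply: eq_bigr => a _.
by rewrite [RHS](reindex_inj (can_inj pK)).
Qed.

Lemma sum_dist_involution_r : \sum_a \sum_b `|x a - x (p b)| = total_dist x.
Proof. by apply: eq_bigr => a _; rewrite [RHS](reindex_inj (can_inj pK)). Qed.

Lemma sum_dist_involution_l : \sum_a \sum_b `|x (p a) - x b| = total_dist x.
Proof. by rewrite [RHS](reindex_inj (can_inj pK)). Qed.

(* For [b = a] and [b = p a] the right-hand side exceeds [4 * |y a - y b| = 0]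
   by [2 * gap a]; summed over [b] this slack is the claimed decrease. *)
Lemma avg_involution_dist a b :
  4 * `|y a - y b| + ((if b == a then 2 * gap a else 0)
                      + (if b == p a then 2 * gap a else 0))
  <= `|x a - x b| + `|x (p a) - x (p b)| + `|x a - x (p b)| + `|x (p a) - x b|.
Proof.
have avg_dist c d : 4 * `|y c - y d| = 2 * `|x c + x (p c) - x d - x (p d)|.
  rewrite /y (_ : _ - _ = (x c + x (p c)) / 2 - (x d + x (p d)) / 2) //.
  by rewrite norm_half_sub (_ : _ - _ = x c + x (p c) - x d - x (p d)); lra.
rewrite /gap; case: (b =P a) => [->|_].
  rewrite !subrr normr0 mulr0 add0r distrC.
  by case: (a =P p a) => [<-|_]; rewrite ?subrr ?normr0; lra.
case: (b =P p a) => [->|_].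
  rewrite avg_dist pK (_ : _ - _ - _ = 0) ?normr0 ?subrr ?normr0; last by lra.
  by rewrite (distrC (x (p a))); lra.
by rewrite avg_dist; have := ler_norm_sub2 (x a) (x (p a)) (x b) (x (p b)); lra.
Qed.

Lemma total_dist_avg_involution :
  total_dist y <= total_dist x - \sum_a gap a.
Proof.
have := ler_sum (index_enum T) (fun a (_ : true) =>
          ler_sum (index_enum T) (fun b (_ : true) => avg_involution_dist a b)).
have -> : \sum_a \sum_b (4 * `|y a - y b| + ((if b == a then 2 * gap a else 0)
                                         + (if b == p a then 2 * gap a else 0)))
          = 4 * total_dist y + 4 * \sum_a gap a.
  rewrite /total_dist !mulr_sumr -big_split; apply: eq_bigr => a _.
  rewrite big_split /= -mulr_sumr big_split /= -!big_mkcond !big_pred1_eq; lra.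
have -> : \sum_a \sum_b (`|x a - x b| + `|x (p a) - x (p b)| + `|x a - x (p b)|
                          + `|x (p a) - x b|) = 4 * total_dist x.
  transitivity (total_dist x + total_dist (x \o p)
    + \sum_a \sum_b `|x a - x (p b)| + \sum_a \sum_b `|x (p a) - x b|).
    by rewrite /total_dist -!big_split; apply: eq_bigr => a _; rewrite -!big_split.
  rewrite total_dist_comp_involution sum_dist_involution_r sum_dist_involution_l.
  lra.
lra.
Qed.

End Involution.

Section Round.
Variables (V : finType) (w : V -> R) (prop acc : V -> option V).
Hypothesis acc_prop : forall v u, acc v = Some u -> prop u = Some v.

(* [(u, true)] is the sender copy u_s and [(u, false)] the receiver copy u_a;
   the two copies of an accepted proposal are exchanged, all others fixed. *)
Definition partner (a : V * bool) : V * bool :=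
  match a with
  | (u, true) => if prop u is Some v then
                   if acc v == Some u then (v, false) else a
                 else a
  | (v, false) => if acc v is Some u then (u, true) else a
  end.

Lemma partnerK : involutive partner.
Proof.
case=> u [] /=; last first.
  by case Au: (acc u) => [v|] /=; rewrite ?(acc_prop Au) ?Au ?eqxx.
case Pu: (prop u) => [v|] /=; last by rewrite Pu.
case: eqP => [Av|/eqP/negbTE nAv] /=; first by rewrite Av.
by rewrite Pu nAv.
Qed.

Definition half_load (a : V * bool) : R := w a.1 / 2.

Definition virtual_load (a : V * bool) : R :=
  (half_load a + half_load (partner a)) / 2.

Lemma round_load_virtual u :
  round_load w prop acc u = virtual_load (u, true) + virtual_load (u, false).
Proof.
rewrite /round_load /sender_val /receiver_val /virtual_load /half_load /=.
case: (prop u) => [v|] /=; [case: (acc v == Some u) |];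
  case: (acc u) => [v'|] /=; lra.
Qed.

Lemma total_dist_half_load : total_dist half_load = 2 * total_dist w.
Proof.
rewrite /total_dist sum_prod_bool mulr_sumr; apply: eq_bigr => u _.
rewrite !sum_prod_bool -big_split mulr_sumr; apply: eq_bigr => v _.
rewrite /half_load /= norm_half_sub; lra.
Qed.

Lemma sender_gap u :
  `|half_load (u, true) - half_load (partner (u, true))|
  = (\sum_(v | acc v == Some u) `|w u - w v|) / 2.
Proof.
rewrite /half_load /=; case Pu: (prop u) => [v|] /=; last first.
  rewrite big_pred0 ?subrr ?normr0 ?mul0r // => v.
  by apply/eqP => /acc_prop; rewrite Pu.
have acc_eq v' : acc v' == Some u -> v' = v.
  by move/eqP/acc_prop; rewrite Pu => -[].
case: (acc v =P Some u) => [Av|nAv] /=.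
  rewrite norm_half_sub (big_pred1 v) // => v'.
  by apply/idP/eqP => [/acc_eq|->] //; rewrite Av.
rewrite big_pred0 ?subrr ?normr0 ?mul0r // => v'.
by apply/negP => /[dup] /acc_eq -> /eqP.
Qed.

Lemma receiver_gap v :
  `|half_load (v, false) - half_load (partner (v, false))|
  = (\sum_(u | acc v == Some u) `|w u - w v|) / 2.
Proof.
rewrite /half_load /=; case: (acc v) => [u|] /=; last first.
  by rewrite big_pred0 ?subrr ?normr0 ?mul0r.
by rewrite norm_half_sub distrC (big_pred1 u).
Qed.

Lemma sum_partner_gap :
  \sum_a `|half_load a - half_load (partner a)| = 2 * Dr w acc.
Proof.
rewrite sum_prod_bool big_split /=.
under eq_bigr do rewrite sender_gap.
under [X in _ + X]eq_bigr do rewrite receiver_gap.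
rewrite -!mulr_suml [X in _ + X / 2](exchange_big_dep xpredT) //= /Dr; lra.
Qed.

Lemma phi_round_load : phi (round_load w prop acc) <= phi w - Dr w acc / 2.
Proof.
have := total_dist_merge virtual_load.
rewrite -(eq_total_dist round_load_virtual).
have := total_dist_avg_involution half_load partnerK.
rewrite sum_partner_gap total_dist_half_load !phi_total_dist.
lra.
Qed.

End Round.
End TotalDistance.

Theorem lemma2 (R : realFieldType) (V : finType) (G : nat -> rel V)
    (w : nat -> V -> R) (prop acc : nat -> V -> option V) :
  (forall r : nat, (1 <= r)%N -> simple_connected (G r)) ->
  (forall v : V, 0 <= w 0%N v) ->
  (forall r : nat, (1 <= r)%N -> valid_prop (G r) (w r.-1) (prop r)) ->
  (forall r : nat, (1 <= r)%N -> valid_acc (w r.-1) (prop r) (acc r)) ->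
  (forall r : nat, (1 <= r)%N ->
     forall v : V, w r v = round_load (w r.-1) (prop r) (acc r) v) ->
  forall r : nat, (1 <= r)%N ->
    phi (w r) <= phi (w r.-1) - Dr (w r.-1) (acc r) / 2.
Proof.
move=> _ _ _ hacc hload r hr.
have acc_prop v u : acc r v = Some u -> prop r u = Some v.
  by move=> Av; have := hacc r hr v; rewrite Av => -[].
rewrite phi_total_dist (eq_total_dist (hload r hr)) -phi_total_dist.
exact: phi_round_load.
Qed.
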